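(* Let $K$ be a finite simplicial complex, let $q$ and $p$ be non-negative integers, and for each $m$ let $\{\sigma^{(m)}_1,\dots,\sigma^{(m)}_{f_m}\}$ be the $m$-simplices of $K$ ($f_m$ their number). Then for every $q$-simplex $\sigma_j^{(q)}$: (1) $$\deg^p_A(\sigma_j^{(q)})=\sum_{q'=p}^{\dim K}\sum_{k=1}^{f_{q'}} adj^p(\sigma_j^{(q)},\sigma_k^{(q')});$$ (2) $$\deg^{p^*}_A(\sigma_j^{(q)})=\deg^p_A(\sigma_j^{(q)})-\sum_{q'=p}^{\dim K}\sum_{k=1}^{f_{q'}}\Delta_{q',k},$$ where $$\Delta_{q',k}=\min\Big(1,\sum_{q''=q'+1}^{\dim K}\sum_{\ell=1}^{f_{q''}}|\operatorname{sig}_L(\sigma^{(q')}_k,\sigma_\ell^{(q'')};\sigma_k^{(q')})|\cdot adj^p(\sigma_j^{(q)},\sigma_\ell^{(q'')})\Big)\cdot adj^p(\sigma_j^{(q)},\sigma_k^{(q')}).$$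
   Context: $K$ is a finite abstract simplicial complex (finite family of nonempty finite vertex sets closed under nonempty subsets); a $q$-simplex has $q+1$ vertices; a face is a simplex of $K$ contained in a given simplex (a simplex is a face of itself); $\dim K$ is the maximal dimension of a simplex. Adjacencies: $\sigma^{(q)}\sim_{L_p}\sigma^{(q')}$ iff they have a common $p$-face; $\sigma^{(q)}\sim_{L_{p^*}}\sigma^{(q')}$ iff $\sigma^{(q)}\sim_{L_p}\sigma^{(q')}$ and $\sigma^{(q)}\not\sim_{L_{p+1}}\sigma^{(q')}$; $\sigma^{(q)}\sim_{U_p}\sigma^{(q')}$ iff some $p$-simplex of $K$ contains both. $p$-adjacency: $\sigma^{(q)}\sim_{A_p}\sigma^{(q')}$ iff $\sigma^{(q)}\sim_{L_{p^*}}\sigma^{(q')}$ and $\sigma^{(q)}\not\sim_{U_{p'}}\sigma^{(q')}$, where $p'=q+q'-p$. Maximal $p$-adjacency: $\sigma^{(q')}\sim_{A_{p^*}}\sigma^{(q)}$ iff $\sigma^{(q')}\sim_{A_p}\sigma^{(q)}$ and $\sigma^{(q')}\not\subset\sigma^{(q'')}$ for every simplex $\sigma^{(q'')}$ with $\sigma^{(q'')}\sim_{A_p}\sigma^{(q)}$. The $p$-adjacency degree is $\deg^p_A(\sigma^{(q)})=\#\{\sigma^{(q')}:\sigma^{(q)}\sim_{A_p}\sigma^{(q')}\}$ and the maximal $p$-adjacency degree is $\deg^{p^*}_A(\sigma^{(q)})=\#\{\sigma^{(q')}:\sigma^{(q')}\sim_{A_{p^*}}\sigma^{(q)}\}$ (over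 simplices of all dimensions $q'$). Indicator quantities: $m_L^p(\sigma,\sigma')=1$ if $\sigma,\sigma'$ have a common $p$-face and $0$ otherwise (equivalently $\min(1,\sum_i|\operatorname{sig}_L(\sigma,\sigma';\gamma_i^{(p)})|)$ over all $p$-simplices $\gamma_i^{(p)}$); $m_U^{p}(\sigma,\sigma')=1$ if some $p$-simplex contains both and $0$ otherwise. For $\sigma=\sigma^{(q)}$, $\sigma'=\sigma^{(q')}$ and $p'=q+q'-p$, $adj^p(\sigma,\sigma')=m^p_L(\sigma,\sigma')\big(1-m^{p+1}_L(\sigma,\sigma')\big)\big(1-m^{p'}_U(\sigma,\sigma')\big)$. Here $|\operatorname{sig}_L(\sigma,\sigma';\tau)|$ equals $1$ if $\tau\subseteq\sigma\cap\sigma'$ and $0$ otherwise; in particular $|\operatorname{sig}_L(\sigma_k^{(q')},\sigma_\ell^{(q'')};\sigma_k^{(q')})|=1$ iff $\sigma_k^{(q')}\subseteq\sigma_\ell^{(q'')}$. *)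

From mathcomp Require Import all_boot all_order all_algebra.
Set Implicit Arguments. Unset Strict Implicit. Unset Printing Implicit Defensive.

Section Complex.
Variable T : finType.
Implicit Types (K : {set {set T}}) (s t u : {set T}).

Definition is_complex K : Prop :=
  set0 \notin K /\
  (forall s t, s \in K -> t \subset s -> t != set0 -> t \in K).

Definition sdim s : nat := #|s|.-1.
Definition dimK K : nat := \max_(s in K) sdim s.

Definition is_qsimplex K q s : bool := (s \in K) && (#|s| == q.+1).

Definition mL K p s s' : bool :=
  [exists t in K, (#|t| == p.+1) && (t \subset s) && (t \subset s')].
Definition mU K p s s' : bool :=
  [exists t in K, (#|t| == p.+1) && (s \subset t) && (s' \subset t)].

Definition pprime p s s' : nat := sdim s + sdim s' - p.

Definition adjA K p s s' : bool :=
  mL K p s s' && ~~ mL K p.+1 s s' && ~~ mU K (pprime p s s') s s'.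

Definition adjAstar K p s' s : bool :=
  adjA K p s' s &&
  [forall s'' in K, adjA K p s'' s ==> ~~ (s' \proper s'')].

Definition degA K p s : nat := #|[set s' in K | adjA K p s s']|.
Definition degAstar K p s : nat := #|[set s' in K | adjAstar K p s' s]|.

Definition adjp K p s s' : nat :=
  (mL K p s s' : nat) * (1 - mL K p.+1 s s') * (1 - mU K (pprime p s s') s s').
Definition sigL s s' (tau : {set T}) : nat := tau \subset s :&: s'.

Definition Delta K p s t : nat :=
  let q' := sdim t in
  minn 1 (\sum_(q'.+1 <= q'' < (dimK K).+1)
            \sum_(u in K | #|u| == q''.+1) sigL t u t * adjp K p s u)
  * adjp K p s t.
End Complex.

From mathcomp Require Import all_boot all_order all_algebra.
From mathcomp Require Import zify.

(* Every indicator in the statement is 0/1-valued: [adjp K p s t] is the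
   indicator of [adjA K p s t], and it vanishes unless [t] has between [p+1]
   and [dim K + 1] vertices, so summing it layer by layer counts the
   p-adjacent simplices.  A p-adjacent [t] fails to be maximally p-adjacent
   exactly when some p-adjacent [u] properly contains it; as [u] then lies in
   a strictly higher layer, this is what [Delta K p s t = 1] detects.  So
   [deg^p_A = deg^{p*}_A + sum Delta] simplex by simplex. *)

Set Implicit Arguments.
Unset Strict Implicit.
Unset Printing Implicit Defensive.

Section Adjacency.
Variable T : finType.
Implicit Types (K : {set {set T}}) (s t u : {set T}).

Lemma sum_card_layers K (F : {set T} -> nat) a D :
  \sum_(a <= q < D.+1) \sum_(u in K | #|u| == q.+1) F u =
  \sum_(u in K | a < #|u| <= D.+1) F u.
Proof.
under eq_bigr => q _ do rewrite big_mkcondr /=.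
rewrite exchange_big /= [RHS]big_mkcondr /=; apply: eq_bigr => u _.
case: #|u| => [|k]; first by rewrite big1.
rewrite !ltnS; case: (boolP (a <= k <= D)) => [k_in | k_out].
- rewrite (bigD1_seq k) /= ?eqxx ?mem_iota ?iota_uniq //; last by move: k_in; lia.
  by rewrite big1 ?addn0 // => i /negbTE; rewrite eqSS eq_sym => ->.
- rewrite big_nat big1 // => i /andP [ai iD]; rewrite eqSS.
  by case: eqP => // ki; move: k_out; rewrite ki ai -ltnS iD.
Qed.

Lemma mL_sym K p s t : mL K p s t = mL K p t s.
Proof.
by apply/exists_inP/exists_inP => -[x xK /andP [/andP [cx xs] xt]];
  exists x; rewrite // cx xs xt.
Qed.

Lemma mU_sym K p s t : mU K p s t = mU K p t s.
Proof.
by apply/exists_inP/exists_inP => -[x xK /andP [/andP [cx sx] tx]];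
  exists x; rewrite // cx sx tx.
Qed.

Lemma adjA_sym K p s t : adjA K p s t = adjA K p t s.
Proof. by rewrite /adjA /pprime addnC !(mL_sym K _ s) mU_sym. Qed.

Lemma adjpE K p s t : adjp K p s t = adjA K p s t.
Proof. by rewrite /adjp /adjA; do 2!case: mL; case: mU. Qed.

Lemma sigL_self t u : sigL t u t = (t \subset u).
Proof. by rewrite /sigL subsetIidl. Qed.

Lemma adjA_card K p s t :
  t \in K -> adjA K p s t -> p < #|t| <= (dimK K).+1.
Proof.
move=> tK /andP [/andP [/exists_inP [x _ /andP [/andP [/eqP cx _] xt]] _] _].
have p_lt_t : p < #|t| by rewrite -cx subset_leq_card.
rewrite p_lt_t -(ltn_predK p_lt_t) ltnS.
exact: (@leq_bigmax_cond _ (mem K) (@sdim T) t tK).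
Qed.

Lemma sum_card_layers_adjA K p s (F : {set T} -> nat) :
  (forall t, t \in K -> F t != 0 -> adjA K p s t) ->
  \sum_(p <= q < (dimK K).+1) \sum_(u in K | #|u| == q.+1) F u =
  \sum_(u in K) F u.
Proof.
move=> F_supp; rewrite sum_card_layers big_mkcondr /=.
apply: eq_bigr => u uK; case: ifP => // card_out.
case: (F u =P 0) => // /eqP /(F_supp _ uK) /(adjA_card uK).
by rewrite card_out.
Qed.

Definition has_adjA_superset K p s t :=
  [exists u in K, adjA K p s u && (t \proper u)].

Lemma degAE K p s : degA K p s = \sum_(t in K) adjA K p s t.
Proof.
rewrite /degA -sum1_card big_mkcond [RHS]big_mkcond.
by apply: eq_bigr => t _; rewrite inE; case: (t \in K); case: adjA.
Qed.

Lemma degAstarE K p s :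
  degAstar K p s = \sum_(t in K) (adjA K p s t && ~~ has_adjA_superset K p s t).
Proof.
rewrite /degAstar -sum1_card big_mkcond [RHS]big_mkcond.
apply: eq_bigr => t _; rewrite inE /adjAstar adjA_sym.
have -> : [forall s'' in K, adjA K p s'' s ==> ~~ (t \proper s'')] =
          ~~ has_adjA_superset K p s t.
  rewrite negb_exists; apply: eq_forallb => u.
  by rewrite adjA_sym; case: (u \in K); case: adjA.
by case: (t \in K); case: adjA.
Qed.

Lemma DeltaE K p s t : t \in K ->
  Delta K p s t = (adjA K p s t && has_adjA_superset K p s t).
Proof.
move=> tK; rewrite /Delta adjpE.
have [adj_t | _] := boolP (adjA K p s t); last by rewrite muln0.
rewrite muln1 /= sum_card_layers.
have -> : (sdim t).+1 = #|t|.
  by have /andP [p_lt_t _] := adjA_card tK adj_t; rewrite /sdim (ltn_predK p_lt_t).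
have [/exists_inP [u uK /andP [adj_u t_u]] | no_sup] := boolP (has_adjA_superset K p s t).
- have /andP [t_sub_u t_lt_u] : (t \subset u) && (#|t| < #|u|) by rewrite -properEcard.
  rewrite (bigD1 u) /=; last by rewrite uK t_lt_u; case/andP: (adjA_card uK adj_u).
  by rewrite sigL_self adjpE adj_u t_sub_u; apply/minn_idPl.
- rewrite big1 // => v /andP [vK /andP [t_lt_v _]].
  rewrite sigL_self adjpE; apply/eqP; rewrite muln_eq0 !eqb0.
  apply: contraNT no_sup => /norP [/negPn t_sub_v /negPn adj_v].
  by apply/exists_inP; exists v; rewrite // adj_v properEcard t_sub_v.
Qed.

Lemma degA_degAstar_Delta K p s :
  degA K p s = degAstar K p s + \sum_(t in K) Delta K p s t.
Proof.
rewrite degAE degAstarE -big_split /=; apply: eq_bigr => t tK.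
by rewrite DeltaE //; case: adjA; case: has_adjA_superset.
Qed.

End Adjacency.

Import GRing.Theory.
Local Open Scope ring_scope.

Theorem theoremt (T : finType) (K : {set {set T}}) (q p : nat) (s : {set T}) :
  is_complex K -> is_qsimplex K q s ->
  (degA K p s =
     \sum_(p <= q' < (dimK K).+1) \sum_(t in K | #|t| == q'.+1) adjp K p s t)%N /\
  ((degAstar K p s)%:Z =
     (degA K p s)%:Z -
     (\sum_(p <= q' < (dimK K).+1) \sum_(t in K | #|t| == q'.+1) Delta K p s t)%:Z).
Proof.
move=> _ _; split.
- rewrite (@sum_card_layers_adjA _ K p s) => [|t _]; last by rewrite adjpE; case: adjA.
  by rewrite degAE; apply: eq_bigr => t _; rewrite adjpE.
- rewrite (@sum_card_layers_adjA _ K p s) => [|t tK]; last first.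
    by rewrite DeltaE //; case: adjA.
  by rewrite degA_degAstar_Delta PoszD addrK.
Qed.
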